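(* Let $G\le S_n$ be a Frobenius group with Frobenius kernel $N=\{u_1,\dots,u_{|N|}\}$ and Frobenius complement $H=\{v_1,\dots,v_h\}$, $h=|H|$, so that $G=\{u_iv_j\}$. Then the Gale dual of $P(G)$ is (up to linear change of coordinates) the vector configuration in $\mathbb{R}^{h-1}$ consisting of $|N|$ copies of the all-ones vector $\mathbf{1}$ together with $|N|$ copies of $-e_i$ for each $1\le i\le h-1$, where $e_i$ is the $i$-th standard basis vector. Specifically, the Gale vector corresponding to $u_iv_j$ is $\mathbf{1}$ if $j=1$ and $-e_{j-1}$ otherwise.
   Context: Each $g\in S_n$ is identified with its $n\times n$ permutation matrix (entry $(i,j)$ is $1$ iff $g(i)=j$); $P(G)=\mathrm{conv}\{g:g\in G\}$. $G\le S_n$ is Frobenius if it has a proper subgroup $H$ (Frobenius complement) with $H\cap xHx^{-1}=\{e\}$ for all $x\in G\setminus H$; the Frobenius kernel $N$ (identity together with all fixed-point-free elements of $G$) is a subgroup with $N\cap H=\{e\}$ and $G=NH$. For a polytope with vertices $w_1,\dots,w_r$ and dimension $d$, its Gale dual is the configuration of columns in $\mathbb{R}^{r-d-1}$ of a matrix whose rows form a basis of $\{\lambda\in\mathbb{R}^r:\sum\lambda_iw_i=0\}$, unique up to linear change of coordinates.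
   Formalization: G also acts transitively on {1,…,n}, and N being a subgroup with N ∩ H = {e} and G = NH enter as hypotheses, not as consequences of the definition of a Frobenius group. The paper assumes this as well. *)

From HB Require Import structures.
From mathcomp Require Import all_boot all_order all_algebra all_fingroup.
Set Implicit Arguments. Unset Strict Implicit. Unset Printing Implicit Defensive.
Import GRing.Theory Num.Theory.

(* Frobenius complement in the sense of the paper: a proper subgroup H of G
   with H ∩ x H x^{-1} = {e} for all x ∈ G \ H.  (In MathComp H :^ y = y^-1 H y,
   so x H x^{-1} is H :^ x^-1.) *)
Definition frobenius_complement (gT : finGroupType) (G H : {set gT}) : Prop :=
  H \proper G /\ (forall x, x \in (G :\: H)%g -> (H :&: H :^ x^-1 = 1)%g).

Definition frob_kernel n (G : {set 'S_n}) : {set 'S_n} :=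
  [set g in G | (g == 1%g) || [forall i, g i != i]].

(* Gale vector attached to u_i v_j (with j : 'I_h, j = 0 standing for v_1):
   the all-ones vector if j = 0, and -e_{j-1} otherwise; coordinate t of it. *)
Definition gale_coord (R : nzRingType) (h : nat) (j : 'I_h) (t : 'I_h.-1) : R :=
  if val j == 0%N then 1%R else if val j == t.+1 then (-1)%R else 0%R.

(* linear dependencies of the vertices w : I -> 'S_n (as permutation matrices) *)
Definition is_dependency (R : nzRingType) (I : finType) n (w : I -> 'S_n)
  (lam : I -> R) : Prop :=
  (\sum_(p : I) (lam p *: (perm_mx (w p) : 'M[R]_n)) = 0)%R.

From HB Require Import structures.
From mathcomp Require Import all_boot all_order all_algebra all_fingroup.
From mathcomp Require Import zify.
Import GRing.Theory Num.Theory.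

(* By Burnside's lemma the elements of the transitive group G fix #|G| points
   altogether.  The identity fixes n of them, the other elements of N none, and
   every element of G \ N at least one; as N acts semiregularly, #|N| <= n.
   Hence #|N| = n, N is regular, and every element of G \ N fixes exactly one
   point.  Regularity makes the permutation matrices of each coset N g sum to
   the all-ones matrix, so the Gale rows are dependencies.  Conversely, pairing
   a dependency mu with the permutation matrix of w q gives
   \sum_p mu p * fix (w p * (w q)^-1) = 0, and the fixed-point counts
   n, 0 or 1 make this system force mu (i, j) to depend on j only, with zero
   sum over j: exactly the span of the Gale rows. *)

Set Implicit Arguments.
Unset Strict Implicit.
Unset Printing Implicit Defensive.

Definition nfix n (g : 'S_n) : nat := #|[set a | g a == a]|.

Lemma nfix_eq_card n (g g' : 'S_n) : #|[pred a | g a == g' a]| = nfix (g * g'^-1)%g.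
Proof.
apply: eq_card => a; rewrite !inE permM.
by rewrite -[in RHS](inj_eq (@perm_inj _ g')) permKV.
Qed.

Lemma nfix1 n : nfix (1%g : 'S_n) = n.
Proof. by rewrite -[RHS]card_ord; apply: eq_card => a; rewrite inE perm1 eqxx. Qed.

Section FrobeniusKernel.
Variables (n : nat) (G : {group 'S_n}).
Hypotheses (trG : [transitive G, on [set: 'I_n] | 'P])
  (groupN : group_set (frob_kernel G)).
Local Notation N := (frob_kernel G).
Let NG := Group groupN.

Lemma frob_kernel_sub : N \subset G.
Proof. by apply/subsetP => g; rewrite inE => /andP[]. Qed.

Lemma nfix_kernel x : x \in N -> x != 1%g -> nfix x = 0%N.
Proof.
rewrite inE => /andP[_ /orP[->//|/forallP fpf]] _.
by apply/eqP; rewrite cards_eq0; apply/eqP/setP => a; rewrite !inE (negbTE (fpf a)).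
Qed.

Lemma nfix_compl_gt0 x : x \in G :\: N -> (0 < nfix x)%N.
Proof.
rewrite !inE => /andP[+ Gx]; rewrite Gx negb_or => /andP[_ /forallPn[a]].
by rewrite negbK => xa; apply/card_gt0P; exists a; rewrite inE.
Qed.

Lemma frob_kernel_semiregular x y a : x \in N -> y \in N -> x a = y a -> x = y.
Proof.
move=> Nx Ny xya; have: (x * y^-1)%g \in NG by rewrite groupM ?groupV.
rewrite inE => /andP[_ /orP[|/forallP/(_ a)]]; first by rewrite mulg_eq1 invgK => /eqP.
by rewrite permM xya permK eqxx.
Qed.

Lemma card_frob_kernel_le : (#|N| <= n)%N.
Proof.
case/imsetP: trG => a _ _; rewrite -(card_in_imset (f := fun x : 'S_n => x a)).
  by rewrite -[X in (_ <= X)%N]card_ord max_card.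
by move=> x y Nx Ny; apply: frob_kernel_semiregular.
Qed.

Lemma sum_nfix : (\sum_(g in G) nfix g)%N = #|G|.
Proof.
have := Frobenius_Cauchy (atrans_acts trG).
move: (trG); rewrite atrans_acts_card => /andP[_ /eqP ->]; rewrite mul1n => <-.
by apply: eq_bigr => g _; apply: eq_card => a; rewrite !inE sub1set inE.
Qed.

Lemma sum_nfix_compl : (n + \sum_(g in G :\: N) nfix g)%N = #|G|.
Proof.
rewrite -sum_nfix [RHS](big_setID N) /= (setIidPr frob_kernel_sub).
congr (_ + _); rewrite (bigD1 1%g) ?inE ?group1 ?eqxx //= nfix1.
by rewrite big1 ?addn0 // => g /andP[Ng g1]; apply: nfix_kernel.
Qed.

Lemma card_frob_kernel : #|N| = n.
Proof.
have le_compl : (#|G :\: N| <= \sum_(g in G :\: N) nfix g)%N.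
  by rewrite -sum1_card; apply: leq_sum; apply: nfix_compl_gt0.
move: le_compl sum_nfix_compl card_frob_kernel_le.
rewrite cardsD (setIidPr frob_kernel_sub).
have := subset_leq_card frob_kernel_sub.
by move: (\sum_(g in _) _) #|G| #|N| => S g k; lia.
Qed.

Lemma nfix_compl x : x \in G :\: N -> nfix x = 1%N.
Proof.
move=> GNx; have le1 g : g \in G :\: N -> (1 <= nfix g ?= iff (1 == nfix g))%N.
  by move/nfix_compl_gt0/leqif_eq.
have eq_sum : (\sum_(g in G :\: N) 1 == \sum_(g in G :\: N) nfix g)%N.
  have := sum_nfix_compl; rewrite sum1_card cardsD (setIidPr frob_kernel_sub).
  rewrite card_frob_kernel; move: (\sum_(g in _) _) #|G| => S g; lia.
by move: eq_sum; rewrite (leqif_sum le1).2 => /forall_inP/(_ x GNx)/eqP.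
Qed.

Variable H : {group 'S_n}.
Hypotheses (NH1 : N :&: H = 1%g) (NHG : (N * H)%g = G).

Lemma nfix_mulNH x x' y y' : x \in N -> x' \in N -> y \in H -> y' \in H ->
  nfix ((x * y) * (x' * y')^-1)%g = if y == y' then (if x == x' then n else 0) else 1%N.
Proof.
move=> Nx Nx' Hy Hy'.
case: eqVneq => [<-|yy'].
  rewrite invMg mulgA mulgK; case: eqVneq => [->|xx']; first by rewrite mulgV nfix1.
  by apply: nfix_kernel; rewrite ?(@groupM _ NG) ?(@groupV _ NG) // mulg_eq1 invgK.
have sHG : H \subset G by rewrite -NHG (mulG_subr NG).
have Gz : (x * y * (x' * y')^-1)%g \in G.
  have [Gx Gx'] := (subsetP frob_kernel_sub _ Nx, subsetP frob_kernel_sub _ Nx').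
  by rewrite !(groupM, groupV) // (subsetP sHG).
apply: nfix_compl; rewrite inE Gz andbT.
apply: contra yy' => NGz.
suff: (y * y'^-1)%g \in N :&: H by rewrite NH1 inE mulg_eq1 invgK.
rewrite inE (groupM Hy) ?groupV // andbT.
have -> : (y * y'^-1 = x^-1 * ((x * y) * (x' * y')^-1) * x')%g.
  by rewrite invMg !mulgA mulVg mul1g mulgKV.
by rewrite -[_ \in N]/(_ \in NG); apply: groupM; [apply: groupM; rewrite ?groupV|].
Qed.

End FrobeniusKernel.
Local Open Scope ring_scope.

Lemma sumr_card (R : nzSemiRingType) (T : finType) (P : pred T) :
  \sum_a ((P a)%:R : R) = #|P|%:R.
Proof.
rewrite -sumr_const [RHS]big_mkcond.
by apply: eq_bigr => a _; rewrite unfold_in; case: (P a).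
Qed.

Lemma sum_pair (R : nmodType) (I J : finType) (F : I * J -> R) :
  \sum_p F p = \sum_i \sum_j F (i, j).
Proof. by rewrite [RHS]pair_big; apply: eq_bigr => -[i j]. Qed.

Section PermutationMatrices.
Variables (R : nzRingType) (n : nat).

Lemma sum_perm_mx_regular (I : finType) (f : I -> 'S_n) :
  #|I| = n -> (forall a, injective (fun i => f i a)) ->
  \sum_i (perm_mx (f i) : 'M[R]_n) = const_mx 1.
Proof.
move=> cardI f_inj; apply/matrixP => a b; rewrite summxE !mxE.
have /codomP[i0 /= b_fi0] : b \in codom (fun i => f i a).
  by apply: inj_card_onto; rewrite ?card_ord ?cardI.
rewrite (bigD1 i0) //= !mxE b_fi0 eqxx big1 ?addr0 // => i i_i0.
by rewrite !mxE; case: eqP => // /(f_inj a) eq_i; rewrite eq_i eqxx in i_i0.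
Qed.

Lemma dependency_nfix (I : finType) (w : I -> 'S_n) (mu : I -> R) (g : 'S_n) :
  is_dependency w mu -> \sum_p mu p * (nfix (w p * g^-1)%g)%:R = 0.
Proof.
move=> /matrixP dep.
transitivity (\sum_a (\sum_p mu p *: (perm_mx (w p) : 'M[R]_n)) a (g a)); last first.
  by apply: big1 => a _; rewrite dep mxE.
under [RHS]eq_bigr do rewrite summxE; rewrite exchange_big; apply: eq_bigr => p _.
rewrite -nfix_eq_card -sumr_card mulr_sumr; apply: eq_bigr => a _.
by rewrite !mxE.
Qed.

End PermutationMatrices.

Section GaleVectors.
Variable R : nzRingType.

Lemma gale_comb0 h (c : 'I_h -> R) :
  \sum_t c t * gale_coord R (ord0 : 'I_h.+1) t = \sum_t c t.
Proof. by apply: eq_bigr => t _; rewrite /gale_coord eqxx mulr1. Qed.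

Lemma gale_comb_lift h (c : 'I_h -> R) j :
  \sum_t c t * gale_coord R (lift ord0 j) t = - c j.
Proof.
rewrite (bigD1 j) //= big1 ?addr0 => [|t t_j]; rewrite /gale_coord /= /bump leq0n add1n.
  by rewrite eqxx mulrN1.
by rewrite eqSS (inj_eq val_inj) eq_sym (negbTE t_j) mulr0.
Qed.

Lemma gale_sum h (t : 'I_h.-1) : \sum_(j : 'I_h) gale_coord R j t = 0.
Proof.
case: h t => [[]//|h] t; rewrite big_ord_recl /gale_coord /=.
rewrite (bigD1 t) //= /bump leq0n add1n eqxx big1 ?addr0 ?subrr // => j j_t.
by rewrite eqSS (inj_eq val_inj) (negbTE j_t).
Qed.

Lemma gale_indep h (c : 'I_h.-1 -> R) :
  (forall j : 'I_h, \sum_t c t * gale_coord R j t = 0) -> forall t, c t = 0.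
Proof.
case: h c => [c _ []//|h c comb0 t].
by apply/eqP; rewrite -oppr_eq0 -(gale_comb_lift c) comb0.
Qed.

Lemma gale_span h (phi : 'I_h -> R) : \sum_j phi j = 0 ->
  exists c : 'I_h.-1 -> R, forall j, phi j = \sum_t c t * gale_coord R j t.
Proof.
case: h phi => [|h] phi sum0; first by exists (fun _ => 0) => -[].
exists (fun t => - phi (lift ord0 t)) => j.
case: (unliftP ord0 j) => [t ->|->]; first by rewrite gale_comb_lift opprK.
move/eqP: sum0; rewrite big_ord_recl addr_eq0 => /eqP ->.
by rewrite gale_comb0 sumrN.
Qed.

End GaleVectors.

Lemma frob_fix_kernel (R : numDomainType) m h (mu : 'I_m * 'I_h -> R) (i0 : 'I_m) :
  (forall q, \sum_p mu p *
     (if p.2 == q.2 then if p.1 == q.1 then m else 0 else 1)%:R = 0) ->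
  exists2 phi : 'I_h -> R, \sum_j phi j = 0 & forall p, mu p = phi p.2.
Proof.
move=> ker; have m_neq0 : m%:R != 0 :> R.
  by rewrite pnatr_eq0 -lt0n (leq_ltn_trans _ (ltn_ord i0)).
have key i j : m%:R * mu (i, j) + \sum_i' \sum_(j' | j' != j) mu (i', j') = 0.
  rewrite -[RHS](ker (i, j)) sum_pair /=.
  under [RHS]eq_bigr do rewrite (bigD1 j) //=.
  rewrite (eqxx j) big_split /=; congr (_ + _).
    rewrite (bigD1 i) //= eqxx mulrC big1 ?addr0 // => i' /negbTE->.
    by rewrite mulr0.
  by apply: eq_bigr => i' _; apply: eq_bigr => j' /negbTE->; rewrite mulr1.
have col_const i i' j : mu (i, j) = mu (i', j).
  apply: (mulfI m_neq0).
  by apply: (addIr (\sum_i1 \sum_(j1 | j1 != j) mu (i1, j1))); rewrite !key.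
exists (fun j => mu (i0, j)) => [|[i j]]; last exact: col_const.
case: h mu ker key col_const => [|h] mu _ key col_const; first by rewrite big_ord0.
apply: (mulfI m_neq0); rewrite mulr0 -[RHS](key i0 ord0) (bigD1 ord0) //= mulrDr.
congr (_ + _); under [RHS]eq_bigr do under eq_bigr do rewrite (col_const _ i0).
by rewrite sumr_const card_ord mulr_natl.
Qed.

Theorem proposition5 (R : realFieldType) (n : nat) (G H : {group 'S_n})
  (u : 'I_#|frob_kernel G| -> 'S_n) (v : 'I_#|H| -> 'S_n) :
  [transitive G, on [set: 'I_n] | 'P] ->
  frobenius_complement G H ->
  group_set (frob_kernel G) ->
  frob_kernel G :&: H = 1%g ->
  (frob_kernel G * H)%g = G ->
  injective u -> (forall i, u i \in frob_kernel G) ->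
  injective v -> (forall j, v j \in H) ->
  let w := fun p : 'I_#|frob_kernel G| * 'I_#|H| => (u p.1 * v p.2)%g in
  let lam := fun (t : 'I_#|H|.-1) (p : 'I_#|frob_kernel G| * 'I_#|H|) =>
               gale_coord R p.2 t in
  [/\ forall t, is_dependency w (lam t),
      forall c : 'I_#|H|.-1 -> R,
        (forall p, \sum_t c t * lam t p = 0) -> forall t, c t = 0
    & forall mu, is_dependency w mu ->
        exists c : 'I_#|H|.-1 -> R, forall p, mu p = \sum_t c t * lam t p].
Proof.
move=> trG _ groupN NH1 NHG u_inj uN v_inj vH w lam.
have cardN := card_frob_kernel trG groupN.
have N_gt0 : (0 < #|frob_kernel G|)%N.
  by apply/card_gt0P; exists 1%g; rewrite inE group1 eqxx.
have sum_u g : \sum_i (perm_mx (u i * g)%g : 'M[R]_n) = const_mx 1.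
  apply: sum_perm_mx_regular => [|a i i' /=]; first by rewrite card_ord.
  rewrite !permM => /perm_inj /(frob_kernel_semiregular groupN (uN i) (uN i')).
  exact: u_inj.
split=> [t | c comb0 | mu /dependency_nfix orth].
- rewrite /is_dependency /lam /w sum_pair exchange_big /=.
  under eq_bigr do rewrite -scaler_sumr sum_u.
  by rewrite -scaler_suml gale_sum scale0r.
- by apply: gale_indep => j; apply: (comb0 (Ordinal N_gt0, j)).
have [|phi phi0 muE] := frob_fix_kernel (Ordinal N_gt0) (mu := mu).
  move=> [i' j']; rewrite -[RHS](orth (w (i', j'))); apply: eq_bigr => -[i j] _.
  rewrite /w (nfix_mulNH trG groupN NH1 NHG) //= (inj_eq u_inj) (inj_eq v_inj).
  by case: (j == j'); case: (i == i'); rewrite // [X in X%:R]cardN.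
have [c phiE] := gale_span phi0; exists c => p.
by rewrite muE phiE.
Qed.
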